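(* Let $(S,\mathcal{S})$ be a measurable space with $\Delta\in\mathcal{S}\otimes\mathcal{S}$, and let $\mathcal{R}\subseteq \mathcal{S}$ be a ring of sets with $\sigma(\mathcal{R})=\mathcal{S}$. If $\pi_{1},\pi_{2}: \Omega\to C(S)$ are two cr-sets satisfying $P(\pi_{1}\cap A\neq \emptyset)=P(\pi_{2}\cap A\neq \emptyset)$ for all $A\in\mathcal{R}$, and if $\pi_{1}$ is $\sigma$-finite on $\mathcal{R}$, then $P_{\pi_{1}}=P_{\pi_{2}}$.
   Context: $\Delta=\{(x,x)\mid x\in S\}$ is the diagonal of $S\times S$. $(\Omega,\mathcal{F},P)$ is a probability space. $C(S)$ denotes the set of all countable (finite or denumerable) subsets of $S$. For $A\subseteq S$, $N_A:C(S)\to\mathbb{N}_0\cup\{\infty\}$, $M\mapsto |A\cap M|$. $\mathcal{C}(\mathcal{S})$ is the smallest $\sigma$-field on $C(S)$ making all $N_A$, $A\in\mathcal{S}$, measurable. A cr-set is an $\mathcal{F}$-$\mathcal{C}(\mathcal{S})$ measurable map $\pi:\Omega\to C(S)$; $P_\pi$ denotes its law. A map $\tau:\Omega\to C(S)$ is $\sigma$-finite on $\mathcal{E}\subseteq\mathcal{S}$ if there are $A_n\in\mathcal{E}$, $n\in\mathbb{N}$, with $S=\bigcup_n A_n$ such that $|\tau(\omega)\cap A_n|<\infty$ for all $\omega\in\Omega$ and all $n$. *)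

From HB Require Import structures.
From mathcomp Require Import all_boot all_order all_algebra.
From mathcomp Require Import finmap all_classical all_reals all_analysis.
Set Implicit Arguments. Unset Strict Implicit. Unset Printing Implicit Defensive.
Import Order.TTheory GRing.Theory Num.Theory.
Local Open Scope classical_set_scope.
Local Open Scope fset_scope.

Definition CS (S : Type) := {M : set S | countable M}.

(* N_A(M) = |A ∩ M| in N_0 ∪ {∞}; [None] encodes ∞. *)
Definition NA (S : choiceType) (A : set S) (M : CS S) : option nat :=
  if pselect (finite_set (A `&` proj1_sig M))
  then Some (#|` fset_set (A `&` proj1_sig M)|)%fset
  else None.

(* \mathcal{C}(\mathcal{S}): smallest sigma-field on C(S) making all N_A,
   A measurable, measurable (N_0 ∪ {∞} carrying its discrete sigma-field). *)
Definition CSigma (d : measure_display) (S : measurableType d) : set (set (CS S)) :=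
  <<s [set B | exists A (n : option nat),
         measurable A /\ B = [set M | NA A M = n]] >>.

Definition crset (dO d : measure_display) (Omega : measurableType dO)
  (S : measurableType d) (pi : Omega -> CS S) : Prop :=
  forall B, CSigma B -> measurable (pi @^-1` B).

Definition sigma_finite_on (Omega : Type) (S : Type) (tau : Omega -> CS S)
  (E : set (set S)) : Prop :=
  exists A : nat -> set S, (forall n, E (A n)) /\ \bigcup_n A n = setT /\
    forall w n, finite_set (proj1_sig (tau w) `&` A n).

Definition law (dO d : measure_display) (Omega : measurableType dO)
  (S : measurableType d) (R : realType) (P : probability Omega R)
  (pi : Omega -> CS S) : set (CS S) -> \bar R :=
  fun B => P (pi @^-1` B).

From HB Require Import structures.
From mathcomp Require Import all_boot all_order all_algebra.
From mathcomp Require Import finmap all_classical all_reals all_analysis.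
Set Implicit Arguments. Unset Strict Implicit. Unset Printing Implicit Defensive.
Import Order.TTheory.
Local Open Scope classical_set_scope.

(* The avoidance events {M | M ∩ A = ∅}, A ∈ R, form a π-system on which the
   two laws agree (their complements are the hitting events of the
   hypothesis), so by Dynkin's π-λ theorem P_π1 and P_π2 agree on the σ-field
   Sg they generate.  Since the diagonal is measurable and σ(R) = S, some
   sequence (e_i) in R separates the points of S; then N_A(M) ≥ n iff, for
   some m, M meets n distinct atoms of A cut out by e_0, ..., e_{m-1}, which
   puts {N_A = n} in Sg for A ∈ R.  A second π-λ argument over A ∈ S shows that
   every C(S)-event B agrees with an Sg-event on the set L of configurations
   having finitely many points in each F_j, where (F_j) is a nondecreasing
   exhaustion of S in R witnessing the σ-finiteness of π1.  As π1 ∈ L surely,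
   P(π2 ∈ L) = 1 and P(π1 ∈ B) = P(π1 ∈ B ∩ L) = P(π2 ∈ B ∩ L) = P(π2 ∈ B). *)

Section g_sigma_closure.
Context {T : Type} (G : set (set T)).
Local Notation Sg := (<<s G >>).

Lemma g_sigmaC A : Sg A -> Sg (~` A).
Proof. by rewrite -setTD; exact: sigma_algebraCD. Qed.

Lemma g_sigmaT : Sg setT.
Proof. by rewrite -[X in Sg X]setC0; apply: g_sigmaC; exact: sigma_algebra0. Qed.

Lemma g_sigmaU A B : Sg A -> Sg B -> Sg (A `|` B).
Proof.
move=> SA SB; rewrite -bigcup2E; apply: sigma_algebra_bigcup => -[|[|i]] //=.
exact: sigma_algebra0.
Qed.

Lemma g_sigmaI A B : Sg A -> Sg B -> Sg (A `&` B).
Proof.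
move=> SA SB; rewrite -[A `&` B]setCK setCI.
by apply: g_sigmaC; apply: g_sigmaU; exact: g_sigmaC.
Qed.

Lemma g_sigmaD A B : Sg A -> Sg B -> Sg (A `\` B).
Proof. by move=> SA SB; rewrite setDE; apply: g_sigmaI => //; exact: g_sigmaC. Qed.

Lemma g_sigma_bigcup (I : countType) (J : set I) (F : I -> set T) :
  (forall i, J i -> Sg (F i)) -> Sg (\bigcup_(i in J) F i).
Proof.
move=> SF; pose F' n := if choice.unpickle n is Some i then
  (if `[< J i >] then F i else set0) else set0.
have -> : \bigcup_(i in J) F i = \bigcup_n F' n.
  apply/seteqP; split => [x [i Ji Fix]|x [n _]].
    by exists (choice.pickle i) => //; rewrite /F' choice.pickleK asboolT.
  rewrite /F'; case: (choice.unpickle n) => // i.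
  by case: ifPn => // /asboolP Ji Fix; exists i.
apply: sigma_algebra_bigcup => n; rewrite /F'.
case: (choice.unpickle n) => [i|]; last exact: sigma_algebra0.
by case: ifPn => [/asboolP/SF//|_]; exact: sigma_algebra0.
Qed.

Lemma g_sigma_bigcap (I : countType) (J : set I) (F : I -> set T) :
  (forall i, J i -> Sg (F i)) -> Sg (\bigcap_(i in J) F i).
Proof.
move=> SF; rewrite -[X in Sg X]setCK setC_bigcap.
by apply: g_sigmaC; apply: g_sigma_bigcup => i Ji; apply: g_sigmaC; exact: SF.
Qed.

End g_sigma_closure.

Lemma probability_preimage_g_sigma_eq d (Omega : measurableType d)
    (R : realType) (P : probability Omega R) (T : Type) (G : set (set T))
    (X1 X2 : Omega -> T) :
  setI_closed G ->
  (forall B, <<s G >> B -> measurable (X1 @^-1` B)) ->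
  (forall B, <<s G >> B -> measurable (X2 @^-1` B)) ->
  (forall B, G B -> P (X1 @^-1` B) = P (X2 @^-1` B)) ->
  forall B, <<s G >> B -> P (X1 @^-1` B) = P (X2 @^-1` B).
Proof.
move=> GI mX1 mX2 PG.
pose H := [set B | <<s G >> B /\ P (X1 @^-1` B) = P (X2 @^-1` B)].
suff GH : <<s G >> `<=` H by move=> B /GH[].
apply: (lambda_system_subset GI) => //; last first.
  by move=> B GB; split; [exact: sub_sigma_algebra|exact: PG].
split => //.
- by split; [exact: g_sigmaT|rewrite !preimage_setT].
- move=> A B BA [SA PA] [SB PB]; split; first exact: g_sigmaD.
  have PD X : measurable (X @^-1` A) -> measurable (X @^-1` B) ->
      P (X @^-1` (A `\` B)) = (P (X @^-1` A) - P (X @^-1` B))%E.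
    move=> mA mB; rewrite (_ : X @^-1` (A `\` B) = X @^-1` A `\` X @^-1` B) //.
    rewrite measureD // ?ltey_eq ?fin_num_measure // setIidr //.
    exact: preimage_subset.
  have [mA1 mB1] := (mX1 _ SA, mX1 _ SB); have [mA2 mB2] := (mX2 _ SA, mX2 _ SB).
  by rewrite !PD ?PA ?PB.
- move=> F ndF HF; split; first by apply: g_sigma_bigcup => i _; exact: (HF i).1.
  have cvgP (X : Omega -> T) : (forall i, measurable (X @^-1` F i)) ->
      (fun i => P (X @^-1` F i)) @ \oo --> P (X @^-1` \bigcup_i F i).
    move=> mXF; rewrite preimage_bigcup.
    apply: nondecreasing_cvg_mu => //; first exact: bigcup_measurable.
    move=> i j ij; apply/subsetPset; apply: preimage_subset.
    exact/subsetPset/ndF.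
  have c1 := cvgP X1 (fun i => mX1 _ (HF i).1).
  have c2 := cvgP X2 (fun i => mX2 _ (HF i).1).
  have PF : (fun i => P (X1 @^-1` F i)) = (fun i => P (X2 @^-1` F i)).
    by apply: funext => i; exact: (HF i).2.
  by rewrite PF in c1; exact: (cvg_unique _ c1 c2).
Qed.

Definition separating (T : Type) (e : nat -> set T) :=
  forall x y, x <> y -> exists i, ~ (e i x <-> e i y).

Lemma g_sigma_inseparable (T : Type) (G : set (set T)) (x y : T) :
  (forall A, G A -> (A x <-> A y)) -> forall A, <<s G >> A -> (A x <-> A y).
Proof.
move=> GA; apply: smallest_sub => //; split => //.
- by move=> A Axy; split=> -[_ nAx]; split=> // ?; apply: nAx; exact/Axy.
- by move=> F Fxy; split=> -[i _ Fix]; exists i => //; exact/Fxy.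
Qed.

Lemma g_sigma_countable_subfamily (T : Type) (G : set (set T)) (g0 : set T) :
  G g0 -> <<s G >> `<=`
    [set A | exists F : nat -> set T, (forall k, G (F k)) /\ <<s range F >> A].
Proof.
move=> Gg0; apply: smallest_sub; last first.
  move=> A GA; exists (fun=> A); split => //.
  by apply: sub_sigma_algebra; exists 0%N.
split.
- by exists (fun=> g0); split => //; exact: sigma_algebra0.
- by move=> A [F [GF FA]]; exists F; split => //; exact: sigma_algebraCD.
- move=> A /choice[Fs hFs].
  pose F j := if choice.unpickle j is Some (n, k) then Fs n k else g0.
  exists F; split.
    by move=> j; rewrite /F; case: (choice.unpickle j) => [[n k]|] //; exact: (hFs n).1.
  apply: sigma_algebra_bigcup => n; apply: (sub_sigma_algebra2 _ (hFs n).2).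
  by move=> _ [k _ <-]; exists (choice.pickle (n, k)) => //; rewrite /F choice.pickleK.
Qed.

Lemma separating_from_g_sigma (T : Type) (G : set (set T)) (g0 : set T)
    (e : nat -> set T) :
  G g0 -> (forall i, <<s G >> (e i)) -> separating e ->
  exists2 e' : nat -> set T, (forall i, G (e' i)) & separating e'.
Proof.
move=> Gg0 Ge e_sep.
have [F hF] := choice (fun i => g_sigma_countable_subfamily Gg0 (Ge i)).
pose e' n := if choice.unpickle n is Some (i, k) then F i k else g0.
exists e' => [n|x y xy].
  by rewrite /e'; case: (choice.unpickle n) => [[i k]|] //; exact: (hF i).1.
have [i nei] := e_sep x y xy; apply: contrapT => e'_nsep; apply: nei.
apply: (g_sigma_inseparable _ (hF i).2) => _ [k _ <-].
have : e' (choice.pickle (i, k)) x <-> e' (choice.pickle (i, k)) y.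
  by apply: contrapT => ?; apply: e'_nsep; exists (choice.pickle (i, k)).
by rewrite /e' choice.pickleK.
Qed.

Lemma measurable_diagonal_separating d (S : measurableType d) :
  measurable [set xy : S * S | xy.1 = xy.2] ->
  exists2 e : nat -> set S, (forall i, measurable (e i)) & separating e.
Proof.
rewrite measurable_prod_measurableType => mD.
have [|r [rG Dr]] := g_sigma_countable_subfamily (g0 := set0 `*` set0) _ mD.
  by exists set0 => //; exists set0.
have /choice[AB hAB] k : exists AB : set S * set S,
    [/\ measurable AB.1, measurable AB.2 & r k = AB.1 `*` AB.2].
  by have [A mA [B mB <-]] := rG k; exists (A, B).
exists (fun n => if odd n then (AB n./2).1 else (AB n./2).2).
  by move=> n; case: ifP => _; have [] := hAB n./2.
move=> x y xy; apply: contrapT => nsep; apply: xy.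
have e_xy n : (if odd n then (AB n./2).1 else (AB n./2).2) x <->
              (if odd n then (AB n./2).1 else (AB n./2).2) y.
  by apply: contrapT => ?; apply: nsep; exists n.
(* No side of a rectangle separates x from y, so no rectangle separates
   (x, x) from (x, y). *)
have r_xy : forall A, range r A -> (A (x, x) <-> A (x, y)).
  move=> _ [k _ <-]; have [_ _ ->] := hAB k; have /= := e_xy k.*2.
  rewrite odd_double doubleK => EB.
  by split=> -[Ax Bx]; split => //; exact/EB.
by apply: (g_sigma_inseparable r_xy Dr).1.
Qed.

Section atoms.
Variables (S : Type) (e : nat -> set S).

Definition pattern m (x : S) : seq bool := [seq `[< e i x >] | i <- iota 0 m].

Definition atom (A : set S) (b : seq bool) : set S :=
  A `&` [set x | pattern (size b) x = b].

Lemma size_pattern m x : size (pattern m x) = m.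
Proof. by rewrite size_map size_iota. Qed.

Lemma patternS m x : pattern m.+1 x = rcons (pattern m x) `[< e m x >].
Proof. by rewrite /pattern -addn1 iotaD map_cat cats1. Qed.

Lemma atom_rcons A b c :
  atom A (rcons b c) = atom A b `&` (if c then e (size b) else ~` e (size b)).
Proof.
apply/seteqP; split => x; rewrite /atom /= size_rcons patternS.
- move=> [Ax /eqP]; rewrite eqseq_rcons => /andP[/eqP pb /eqP <-].
  by split => //; case: asboolP.
- move=> [[Ax pb] ec]; split => //; rewrite pb; congr rcons.
  by case: c ec; [move/asboolT|move/asboolF].
Qed.

Lemma setring_atom (Rg : set (set S)) : setring Rg -> (forall i, Rg (e i)) ->
  forall A b, Rg A -> Rg (atom A b).
Proof.
move=> [_ _ RgD] Rge A b RgA; elim/last_ind: b => [|b c IH].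
  by rewrite /atom (_ : [set x | _] = setT) ?setIT //; apply/seteqP; split.
rewrite atom_rcons; case: c; last by rewrite -setDE; exact: RgD.
by rewrite -setDD; apply: (RgD) => //; exact: RgD.
Qed.

End atoms.

Definition avoids (S : Type) (A : set S) : set (CS S) :=
  [set M | proj1_sig M `&` A = set0].

Definition hits (S : Type) (A : set S) : set (CS S) :=
  [set M | proj1_sig M `&` A !=set0].

Lemma hitsE (S : Type) (A : set S) : hits A = ~` avoids A.
Proof.
apply/seteqP; split => M /=; first by move=> /set0P/eqP.
by move=> MA; apply/set0P/eqP.
Qed.

Lemma avoidsU (S : Type) (A B : set S) : avoids (A `|` B) = avoids A `&` avoids B.
Proof. by apply/seteqP; split => M; rewrite /avoids /= setIUr setU_eq0. Qed.

Section counting.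
Variable S : choiceType.
Implicit Types (A B : set S) (M : CS S).

Definition atleast n A M :=
  exists X : {fset S}, #|` X|%fset = n /\ [set` X] `<=` A `&` proj1_sig M.

Lemma fset_sub_card (Y : {fset S}) n : (n <= #|` Y|%fset)%N ->
  exists X : {fset S}, #|` X|%fset = n /\ [set` X] `<=` [set` Y].
Proof.
move=> nY; exists [fset x in take n (enum_fset Y)]%fset; split.
  rewrite card_fseq undup_id ?size_take_min ?(minn_idPl nY) //.
  exact/take_uniq/fset_uniq.
by move=> x /=; rewrite inE => /mem_take.
Qed.

Lemma atleast_finite n A M : finite_set (A `&` proj1_sig M) ->
  atleast n A M <-> (n <= #|` fset_set (A `&` proj1_sig M)|%fset)%N.
Proof.
move=> finAM; split.
- move=> [X [<- XAM]]; apply/fsubset_leq_card/fsubsetP => x xX.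
  by rewrite in_fset_set //; apply/mem_set; exact: XAM.
- move=> /fset_sub_card[X [cX XAM]]; exists X; split => //.
  by rewrite fset_setK in XAM.
Qed.

Lemma atleast_infinite n A M : infinite_set (A `&` proj1_sig M) -> atleast n A M.
Proof.
move=> infAM; have [Y YAM nY] := infinite_set_fset n infAM.
have [X [cX XY]] := fset_sub_card nY.
by exists X; split => //; exact: subset_trans XY YAM.
Qed.

Lemma NA_finite A M : finite_set (A `&` proj1_sig M) ->
  NA A M = Some #|` fset_set (A `&` proj1_sig M)|%fset.
Proof. by rewrite /NA; case: pselect. Qed.

Lemma NA_infinite A M : infinite_set (A `&` proj1_sig M) -> NA A M = None.
Proof. by rewrite /NA; case: pselect. Qed.

Lemma NA_Some_finite A M k : NA A M = Some k -> finite_set (A `&` proj1_sig M).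
Proof. by rewrite /NA; case: pselect. Qed.

Lemma NA_SomeP n A M : NA A M = Some n <-> atleast n A M /\ ~ atleast n.+1 A M.
Proof.
have [finAM|infAM] := pselect (finite_set (A `&` proj1_sig M)).
  rewrite NA_finite // !atleast_finite //; split => [[<-]|[nAM /negP]].
    by rewrite ltnn.
  by rewrite -ltnNge ltnS => AMn; congr Some; apply/eqP; rewrite eqn_leq AMn.
rewrite NA_infinite //; split => // -[_ []]; exact: atleast_infinite.
Qed.

Lemma NA_eq0 A M : NA A M = Some 0%N <-> avoids A M.
Proof.
rewrite NA_SomeP /avoids /= setIC; split => [[_ AM1]|AM0].
  apply/seteqP; split => // x AMx; apply: AM1.
  by exists [fset x]%fset; rewrite cardfs1; split => // y /=; rewrite inE => /eqP ->.
split; first by exists fset0%fset; split => // x /=; rewrite inE.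
move=> [X [cX]]; rewrite AM0 subset0 => /eqP; rewrite set_fset_eq0 => /eqP X0.
by rewrite X0 cardfs0 in cX.
Qed.

Lemma subset_atleast n A B M : A `<=` B -> atleast n A M -> atleast n B M.
Proof.
move=> AB [X [cX XAM]]; exists X; split => // x /XAM[Ax Mx].
by split => //; exact: AB.
Qed.

Section nondecreasing.
Variable X : nat -> set S.
Hypothesis ndX : {homo X : i j / (i <= j)%N >-> i `<=` j}.

Lemma atleast_bigcup n M :
  atleast n (\bigcup_i X i) M -> exists m, atleast n (X m) M.
Proof.
move=> [Y [cY YXM]].
have /choice[g hg] x : exists i, x \in Y -> X i x.
  case: (boolP (x \in Y)) => [/YXM[[i _ Xix] _]|_]; first by exists i.
  by exists 0%N.
exists (\max_(x <- enum_fset Y) g x), Y; split => // x xY; split; last first.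
  exact: (YXM x xY).2.
have gx_max : (g x <= \max_(y <- enum_fset Y) g y)%N.
  by apply: leq_bigmax_seq => //; exact: xY.
exact: ndX gx_max _ (hg x xY).
Qed.

Lemma NA_bigcup n M : NA (\bigcup_i X i) M = Some n <->
  exists m, forall i, (m <= i)%N -> NA (X i) M = Some n.
Proof.
split.
- move=> /NA_SomeP[XMn XMn1]; have [m XmMn] := atleast_bigcup XMn.
  exists m => i mi; apply/NA_SomeP; split.
    by apply: subset_atleast XmMn; exact: ndX.
  by move=> XiMn1; apply: XMn1; apply: subset_atleast XiMn1; exact: bigcup_sup.
- move=> [m hm]; apply/NA_SomeP.
  have [XmMn _] := (NA_SomeP _ _ _).1 (hm m (leqnn m)).
  split; first by apply: subset_atleast XmMn; exact: bigcup_sup.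
  move=> /atleast_bigcup[j XjMn1].
  have [_] := (NA_SomeP _ _ _).1 (hm _ (leq_maxl m j)).
  by apply; apply: subset_atleast XjMn1; apply: ndX; exact: leq_maxr.
Qed.

End nondecreasing.

Lemma NA_setD A B M k : B `<=` A -> finite_set (A `&` proj1_sig M) ->
  NA (A `\` B) M = Some k <-> exists j, NA A M = Some (j + k)%N /\ NA B M = Some j.
Proof.
move=> BA finAM.
have finBM : finite_set (B `&` proj1_sig M).
  by apply: sub_finite_set finAM; apply: setSI.
have finABM : finite_set ((A `\` B) `&` proj1_sig M).
  by apply: sub_finite_set finAM; apply: setSI; exact: subDsetl.
have BAM : (fset_set (B `&` proj1_sig M) `<=` fset_set (A `&` proj1_sig M))%fset.
  by rewrite -fset_set_sub //; exact: setSI.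
rewrite (NA_finite finABM) (NA_finite finAM) (NA_finite finBM).
have -> : (A `\` B) `&` proj1_sig M = (A `&` proj1_sig M) `\` (B `&` proj1_sig M).
  apply/seteqP; split => x /=; first by move=> [[Ax nBx] Mx]; split => // -[].
  by move=> [[Ax Mx] nBMx]; split => //; split => // Bx; exact: nBMx.
rewrite fset_setD // cardfsDS //.
split => [[<-]|[j [[->] [<-]]]]; last by rewrite addKn.
by eexists; split; last reflexivity; rewrite subnKC // fsubset_leq_card.
Qed.

Section patterns.
Variable e : nat -> set S.
Hypothesis e_sep : separating e.

Lemma separating_pattern_inj (s : seq S) :
  exists m, {in s &, injective (pattern e m)}.
Proof.
have /choice[f hf] xy : exists i, xy.1 <> xy.2 -> ~ (e i xy.1 <-> e i xy.2).
  by have [/e_sep[i]|] := pselect (xy.1 <> xy.2); [exists i|exists 0%N].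
exists (\max_(x <- s) \max_(y <- s) f (x, y)).+1 => x y xs ys pxy.
apply: contrapT => xy; apply: (hf (x, y) xy).
have lt_f : (f (x, y) < (\max_(x <- s) \max_(y <- s) f (x, y)).+1)%N.
  rewrite ltnS; apply: (@leq_trans (\max_(y <- s) f (x, y))).
    exact: (@leq_bigmax_seq _ s xpredT (fun y => f (x, y))).
  exact: (@leq_bigmax_seq _ s xpredT (fun x => \max_(y <- s) f (x, y))).
apply: asbool_eq_equiv; move: pxy => /(congr1 (nth false ^~ (f (x, y)))).
by rewrite /pattern !(nth_map 0%N) ?size_iota // nth_iota.
Qed.

Definition hit_patterns n A : set (CS S) :=
  \bigcup_(p in [set p : nat * seq (seq bool) |
      [/\ uniq p.2, size p.2 = n & forall b, b \in p.2 -> size b = p.1]])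
    \bigcap_(b in [set` p.2]) hits (atom e A b).

Lemma atleast_hit_patterns n A M : atleast n A M <-> hit_patterns n A M.
Proof.
split.
- move=> [X [cX XAM]]; have [m inj_pat] := separating_pattern_inj (enum_fset X).
  exists (m, [seq pattern e m x | x <- enum_fset X]).
    split => /=; [by rewrite map_inj_in_uniq // fset_uniq|by rewrite size_map|].
    by move=> b /mapP[x _ ->]; exact: size_pattern.
  move=> b /= /mapP[x xX ->]; have [Ax Mx] := XAM x xX.
  by exists x; split => //; split => //; rewrite size_pattern.
- move=> [[m s] /= [us <- ssz] hit].
  have [->|[b0 b0s]] : s = [::] \/ exists b0, b0 \in s.
  + by case: s {us ssz hit} => [|b0 s]; [left|right; exists b0; exact: mem_head].
  + by exists fset0%fset; split => // x /=; rewrite inE.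
  have [x0 _] := hit b0 b0s.
  have /choice[f hf] b : exists x, b \in s -> (proj1_sig M `&` atom e A b) x.
    by case: (boolP (b \in s)) => [/hit[x]|_]; [exists x|exists x0].
  exists [fset f b | b in s]%fset; split.
    rewrite card_in_imfset /= ?undup_id // => b b' bs b's fbb'.
    have [_ [_ pb]] := hf b bs; have [_ [_ pb']] := hf b' b's.
    by rewrite -pb -pb' fbb' !ssz.
  by move=> _ /imfsetP[b /= bs ->]; have [Mx [Ax _]] := hf b bs.
Qed.

End patterns.

End counting.

Definition finite_on (S : Type) (F : set S) : set (CS S) :=
  [set M | finite_set (F `&` proj1_sig M)].

Definition locally_finite (S : Type) (F : nat -> set S) : set (CS S) :=
  \bigcap_j finite_on (F j).

Section avoidance_sigma_algebra.
Context d (S : measurableType d) (Rg : set (set S)) (e : nat -> set S).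
Hypotheses (Rg_ring : setring Rg) (Rg_e : forall i, Rg (e i)).
Hypothesis e_sep : separating e.
Local Notation Sg := (<<s [set avoids A | A in Rg] >>).

Lemma avoids_sigma_hits A : Rg A -> Sg (hits A).
Proof.
by move=> RA; rewrite hitsE; apply: g_sigmaC; apply: sub_sigma_algebra; exists A.
Qed.

Lemma avoids_sigma_NA n A : Rg A -> Sg [set M | NA A M = Some n].
Proof.
move=> RA.
have -> : [set M | NA A M = Some n] = hit_patterns e n A `\` hit_patterns e n.+1 A.
  apply/seteqP; split => M /=.
    move=> /NA_SomeP[/(atleast_hit_patterns e_sep) AMn AMn1].
    by split=> // /(atleast_hit_patterns e_sep).
  move=> [/(atleast_hit_patterns e_sep) AMn AMn1]; apply/NA_SomeP.
  by split=> // /(atleast_hit_patterns e_sep).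
by apply: g_sigmaD; apply: g_sigma_bigcup => -[m s] _;
  apply: g_sigma_bigcap => b _; apply: avoids_sigma_hits; exact: setring_atom.
Qed.

Lemma avoids_sigma_finite_on F : Rg F -> Sg (finite_on F).
Proof.
move=> RF; have -> : finite_on F = \bigcup_k [set M | NA F M = Some k].
  apply/seteqP; split => M /=; last by move=> [k _ /NA_Some_finite].
  by move=> /NA_finite FM; econstructor; last exact: FM.
by apply: g_sigma_bigcup => k _; exact: avoids_sigma_NA.
Qed.

Lemma avoids_sigma_NA_setI F : Rg F -> forall A, <<s Rg >> A ->
  forall k, Sg ([set M | NA (A `&` F) M = Some k] `&` finite_on F).
Proof.
move=> RF; have [_ _ /setD_closedP[RgI _]] := Rg_ring.
apply: (lambda_system_subset RgI) => //; last first.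
  move=> A RA k; apply: g_sigmaI; last exact: avoids_sigma_finite_on.
  by apply: avoids_sigma_NA; exact: RgI.
split => //.
- move=> k; rewrite setTI; apply: g_sigmaI; last exact: avoids_sigma_finite_on.
  exact: avoids_sigma_NA.
- move=> A B BA SA SB k.
  have -> : (A `\` B) `&` F = (A `&` F) `\` (B `&` F).
    apply/seteqP; split => x /=; first by move=> [[Ax nBx] Fx]; split => // -[].
    by move=> [[Ax Fx] nBFx]; split => //; split => // Bx; exact: nBFx.
  have finAF M : finite_on F M -> finite_set ((A `&` F) `&` proj1_sig M).
    by move=> FM; apply: sub_finite_set FM; apply: setSI; exact: subIsetr.
  have -> : [set M | NA ((A `&` F) `\` (B `&` F)) M = Some k] `&` finite_on F =
      \bigcup_j (([set M | NA (A `&` F) M = Some (j + k)%N] `&` finite_on F) `&`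
                 ([set M | NA (B `&` F) M = Some j] `&` finite_on F)).
    apply/seteqP; split => M /=.
    + move=> [+ FM]; rewrite NA_setD; [|exact: setSI|exact: finAF].
      by move=> [j [AFM BFM]]; exists j.
    + move=> [j _ [[AFM FM] [BFM _]]]; split => //.
      by rewrite NA_setD; [exists j|exact: setSI|exact: finAF].
  by apply: g_sigma_bigcup => j _; apply: g_sigmaI; [exact: SA|exact: SB].
- move=> Fs ndFs SFs k; rewrite setI_bigcupl.
  have ndFsF : {homo (fun i => Fs i `&` F) : i j / (i <= j)%N >-> i `<=` j}.
    by move=> i j ij; apply: setSI; exact/subsetPset/ndFs.
  have -> : [set M | NA (\bigcup_i (Fs i `&` F)) M = Some k] `&` finite_on F =
      \bigcup_m \bigcap_(i in [set i | (m <= i)%N])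
        ([set M | NA (Fs i `&` F) M = Some k] `&` finite_on F).
    apply/seteqP; split => M /=.
    + move=> [/(NA_bigcup ndFsF)[m hm] FM]; exists m => // i mi.
      by split => //; exact: hm.
    + move=> [m _ hm]; have [_ FM] := hm m (leqnn m); split => //.
      by apply/(NA_bigcup ndFsF); exists m => i mi; exact: (hm i mi).1.
  by apply: g_sigma_bigcup => m _; apply: g_sigma_bigcap => i _; exact: SFs.
Qed.

Section locally_finite_trace.
Variable F : nat -> set S.
Hypothesis Rg_F : forall j, Rg (F j).
Hypothesis ndF : {homo F : i j / (i <= j)%N >-> i `<=` j}.
Hypothesis F_cover : \bigcup_j F j = setT.

Lemma avoids_sigma_locally_finite : Sg (locally_finite F).
Proof. by apply: g_sigma_bigcap => j _; exact: avoids_sigma_finite_on. Qed.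

Lemma avoids_sigma_NA_locally_finite A k : <<s Rg >> A ->
  Sg ([set M | NA A M = Some k] `&` locally_finite F).
Proof.
move=> SA.
have ndAF : {homo (fun i => A `&` F i) : i j / (i <= j)%N >-> i `<=` j}.
  by move=> i j ij; apply: setIS; exact: ndF.
have AF : A = \bigcup_i (A `&` F i) by rewrite -setI_bigcupr F_cover setIT.
have -> : [set M | NA A M = Some k] `&` locally_finite F =
    (\bigcup_m \bigcap_(i in [set i | (m <= i)%N])
      ([set M | NA (A `&` F i) M = Some k] `&` finite_on (F i))) `&` locally_finite F.
  apply/seteqP; split => M [NAk LM]; split => //.
  - rewrite AF in NAk; have [m hm] := (NA_bigcup ndAF k M).1 NAk.
    by exists m => // i mi; split; [exact: hm|exact: LM].
  - rewrite AF; apply/(NA_bigcup ndAF); have [m _ hm] := NAk.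
    by exists m => i mi; exact: (hm i mi).1.
apply: g_sigmaI; last exact: avoids_sigma_locally_finite.
apply: g_sigma_bigcup => m _; apply: g_sigma_bigcap => i _.
exact: avoids_sigma_NA_setI.
Qed.

Lemma CSigma_trace_avoids_sigma : <<s Rg >> = measurable ->
  forall B, CSigma B -> Sg (B `&` locally_finite F).
Proof.
move=> Rg_gen; apply: smallest_sub.
  split => [|B SB|Bs SBs].
  - by rewrite set0I; exact: sigma_algebra0.
  - rewrite (_ : (setT `\` B) `&` _ = locally_finite F `\` (B `&` locally_finite F)).
      exact: g_sigmaD avoids_sigma_locally_finite SB.
    apply/seteqP; split => M /=; first by move=> [[_ nBM] LM]; split => // -[].
    by move=> [LM nBLM]; split => //; split => // BM; exact: nBLM.
  - by rewrite setI_bigcupl; apply: g_sigma_bigcup => i _; exact: SBs.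
move=> _ [A [[k|] [mA ->]]].
  by apply: avoids_sigma_NA_locally_finite; rewrite Rg_gen.
have -> : [set M | NA A M = None] `&` locally_finite F =
    locally_finite F `\` \bigcup_k ([set M | NA A M = Some k] `&` locally_finite F).
  apply/seteqP; split => M /=.
  - by move=> [NAM LM]; split => // -[k _ [NAk _]]; have := etrans (esym NAM) NAk.
  - move=> [LM NAM]; split => //; case E: (NA A M) => [k|] //.
    by exfalso; apply: NAM; exists k.
apply: g_sigmaD; first exact: avoids_sigma_locally_finite.
by apply: g_sigma_bigcup => k _; apply: avoids_sigma_NA_locally_finite; rewrite Rg_gen.
Qed.

End locally_finite_trace.

End avoidance_sigma_algebra.

Lemma sigma_finite_on_nondecreasing (Omega S : Type) (pi : Omega -> CS S)
    (Rg : set (set S)) :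
  setring Rg -> sigma_finite_on pi Rg ->
  exists F : nat -> set S, [/\ forall j, Rg (F j),
    {homo F : i j / (i <= j)%N >-> i `<=` j}, \bigcup_j F j = setT &
    forall w, locally_finite F (pi w)].
Proof.
move=> [Rg0 RgU _] [A [RgA [A_cover finA]]].
exists (fun j => \big[setU/set0]_(i < j.+1) A i); split.
- by move=> j; apply: big_ind => // i _; exact: RgA.
- by move=> i j ij; apply: subset_bigsetU; rewrite ltnS.
- by rewrite bigcup_bigsetU_bigcup.
- move=> w j _; apply: (big_ind (fun X => finite_set (X `&` proj1_sig (pi w)))).
  + by rewrite set0I; exact: finite_set0.
  + by move=> X Y finX finY; rewrite setIUl finite_setU.
  + by move=> i _; rewrite setIC; exact: finA.
Qed.

Lemma avoids_sigma_sub_CSigma d (S : measurableType d) (Rg : set (set S)) :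
  Rg `<=` measurable -> <<s [set avoids A | A in Rg] >> `<=` CSigma (S := S).
Proof.
move=> Rg_meas; apply: smallest_sub; first exact: smallest_sigma_algebra.
move=> _ [A RA <-]; apply: sub_sigma_algebra; exists A, (Some 0%N).
by split; [exact: Rg_meas|apply/seteqP; split => M /NA_eq0].
Qed.

Lemma law_eq_avoids_sigma d dO (S : measurableType d)
    (Omega : measurableType dO) (R : realType) (P : probability Omega R)
    (Rg : set (set S)) (pi1 pi2 : Omega -> CS S) :
  Rg `<=` measurable -> setU_closed Rg -> crset pi1 -> crset pi2 ->
  (forall A, Rg A -> P (pi1 @^-1` hits A) = P (pi2 @^-1` hits A)) ->
  forall X, <<s [set avoids A | A in Rg] >> X -> law P pi1 X = law P pi2 X.
Proof.
move=> Rg_meas RgU cr1 cr2 hits_eq.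
have Sg_CSigma := avoids_sigma_sub_CSigma Rg_meas.
move=> X SX; rewrite /law; move: X SX.
apply: probability_preimage_g_sigma_eq.
- move=> _ _ [A RA <-] [B RB <-]; exists (A `|` B); last exact: avoidsU.
  exact: RgU.
- by move=> X /Sg_CSigma; exact: cr1.
- by move=> X /Sg_CSigma; exact: cr2.
- move=> _ [A RA <-].
  have CSigma_hits : CSigma (hits A).
    rewrite hitsE; apply: g_sigmaC; apply: Sg_CSigma.
    by apply: sub_sigma_algebra; exists A.
  have avoidsE (pi : Omega -> CS S) : pi @^-1` avoids A = ~` (pi @^-1` hits A).
    by rewrite hitsE preimage_setC setCK.
  rewrite !avoidsE !probability_setC ?hits_eq //; [exact: cr2|exact: cr1].
Qed.

Lemma probability_setI_full d (Omega : measurableType d) (R : realType)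
    (P : probability Omega R) (A E : set Omega) :
  measurable A -> measurable E -> P E = 1%E -> P (A `&` E) = P A.
Proof.
move=> mA mE PE1.
have PAE0 : P (A `\` E) = 0%E.
  apply/eqP; rewrite eq_le measure_ge0 andbT.
  have : (P (A `\` E) <= P (~` E))%E.
    apply: le_measure; rewrite ?inE; [exact: measurableD|exact: measurableC|].
    by move=> w [].
  by rewrite probability_setC // PE1 subee.
apply/esym; apply: (etrans (measureDI P mA mE)).
by rewrite -[RHS]add0e; congr (_ + _)%E.
Qed.

Lemma probability_preimage_eq_trace d (Omega : measurableType d) (R : realType)
    (P : probability Omega R) (T : Type) (X1 X2 : Omega -> T) (B L : set T) :
  X1 @^-1` L = setT -> measurable (X2 @^-1` B) -> measurable (X2 @^-1` L) ->
  P (X1 @^-1` L) = P (X2 @^-1` L) ->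
  P (X1 @^-1` (B `&` L)) = P (X2 @^-1` (B `&` L)) ->
  P (X1 @^-1` B) = P (X2 @^-1` B).
Proof.
move=> X1L mB2 mL2 PL PBL.
have PL2 : P (X2 @^-1` L) = 1%E by rewrite -PL X1L probability_setT.
rewrite -[X1 @^-1` B]setIT -X1L -preimage_setI PBL preimage_setI.
exact: probability_setI_full.
Qed.

Unset Implicit Arguments. Set Strict Implicit.

Theorem theorem1p3 (d dO : measure_display) (S : measurableType d)
  (Omega : measurableType dO) (R : realType) (P : probability Omega R)
  (Rg : set (set S)) (pi1 pi2 : Omega -> CS S) :
  measurable [set xy : S * S | xy.1 = xy.2] ->
  Rg `<=` measurable -> setring Rg -> <<s Rg >> = measurable ->
  crset pi1 -> crset pi2 ->
  (forall A, Rg A ->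
     P [set w | proj1_sig (pi1 w) `&` A !=set0] =
     P [set w | proj1_sig (pi2 w) `&` A !=set0]) ->
  sigma_finite_on pi1 Rg ->
  forall B, CSigma B -> law P pi1 B = law P pi2 B.
Proof.
move=> mDelta Rg_meas Rg_ring Rg_gen cr1 cr2 hits_eq fin1 B CB.
have [e Rg_e e_sep] : exists2 e : nat -> set S, (forall i, Rg (e i)) & separating e.
  have [e' me' e'_sep] := measurable_diagonal_separating mDelta.
  apply: (separating_from_g_sigma (g0 := set0)) e'_sep; first by case: Rg_ring.
  by move=> i; rewrite Rg_gen; exact: me'.
have [F [Rg_F ndF F_cover fin1F]] := sigma_finite_on_nondecreasing Rg_ring fin1.
have [_ RgU _] := Rg_ring.
have law_eq := law_eq_avoids_sigma Rg_meas RgU cr1 cr2 hits_eq.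
have L_sigma := avoids_sigma_locally_finite Rg_ring Rg_e e_sep Rg_F.
apply: (probability_preimage_eq_trace (L := locally_finite F)).
- by apply/seteqP; split => // w _; exact: fin1F.
- exact: cr2.
- by apply: cr2; exact: avoids_sigma_sub_CSigma L_sigma.
- exact: law_eq.
- apply: law_eq; exact: CSigma_trace_avoids_sigma.
Qed.
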